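(* WL-powerful GNNs cannot, in general, distinguish a satisfiable residual formula from an unsatisfiable one even after $\Theta(n)$ variable assignments, where $n$ is the number of variables. Precisely: there is a constant $C>0$ such that for every integer $N\ge 4$ there exist 3-SAT formulas $f$ (satisfiable) and $\tilde f$ (unsatisfiable), each with at most $CN$ variables, such that for every partial assignment $\sigma$ of at most $\lfloor N/2\rfloor-1$ variables of $f$ there is a partial assignment $\tilde\sigma$ of variables of $\tilde f$ with $\mathrm{LCN}(\sigma(f))$ and $\mathrm{LCN}(\tilde\sigma(\tilde f))$ indistinguishable by the WL test; in particular, when $\sigma$ is the restriction of a satisfying assignment of $f$, the residual formula $\sigma(f)$ is satisfiable while $\tilde\sigma(\tilde f)$ is unsatisfiable, yet they are WL-indistinguishable.
   Context: A 3-SAT formula is a CNF formula (set of clauses, each a set of literals) with every clause of at most 3 literals. For a CNF formula $f$ on variables $x_1,\dots,x_n$, $\mathrm{LCN}(f)$ is the edge-colored graph with vertices the $2n$ literals $x_i,\neg x_i$ and one vertex per clause, a ''literal-clause'' edge $\{\ell,c\}$ whenever $\ell\in c$, and a differently colored ''literal-literal'' edge $\{x_i,\neg x_i\}$ for each $i$. For a partial assignment $\sigma$, $\sigma(f)$ denotes the residual formula and $\mathrm{LCN}(\sigma(f))$ is $\mathrm{LCN}(f)$ with literal vertices set true by $\sigma$ labeled $\top$, those set false labeled $\bot$, all others a default label. The WL test (color refinement) starts from the vertex labels and repeatedly replaces each vertex color by the pair (old color, for each edge color $c$ the multiset of old colors of neighbors via $c$-colored edges) until the partition stabilizes; run on the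 disjoint union of two graphs, they are indistinguishable iff every color occurs equally often in both. A WL-powerful GNN is one whose distinguishing power equals that of the WL test. *)

From mathcomp Require Import all_boot.
Set Implicit Arguments. Unset Strict Implicit. Unset Printing Implicit Defensive.

(* A literal over variables 'I_n: (i, true) is x_i, (i, false) is ~ x_i. *)
Definition lit (n : nat) : finType := ('I_n * bool)%type.
Definition clause (n : nat) : finType := {set lit n}.
Definition formula (n : nat) : finType := {set clause n}.

Definition is3SAT n (f : formula n) : Prop := forall c, c \in f -> #|c| <= 3.

Definition lit_val n (a : 'I_n -> bool) (l : lit n) : bool := a l.1 == l.2.
Definition satisfies n (a : 'I_n -> bool) (f : formula n) : Prop :=
  forall c, c \in f -> exists2 l, l \in c & lit_val a l.
Definition satisfiable n (f : formula n) : Prop := exists a, satisfies a f.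

Definition passign (n : nat) : finType := {ffun 'I_n -> option bool}.
Definition assigned n (s : passign n) : {set 'I_n} := [set i | s i != None].
(* the residual formula sigma(f) is satisfiable iff some total extension of sigma satisfies f *)
Definition residual_satisfiable n (s : passign n) (f : formula n) : Prop :=
  exists a : 'I_n -> bool, (forall i b, s i = Some b -> a i = b) /\ satisfies a f.

(* edge colours: true = literal-clause edge, false = literal-literal edge *)
Record lgraph := LGraph {
  lg_V : finType;
  lg_lab : lg_V -> nat;
  lg_adj : bool -> rel lg_V }.

(* LCN(sigma(f)): vertices are literals and clauses of f.
   Labels: literal set true by sigma -> 1, set false -> 2, unassigned -> 0;
   clause vertices -> 3 (vertex type label). *)
Definition lcn_vert n (f : formula n) : finType := (lit n + {c : clause n | c \in f})%type.

Definition lcn_lab n (f : formula n) (s : passign n) (v : lcn_vert f) : nat :=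
  match v with
  | inl l => match s l.1 with
             | None => 0
             | Some b => if b == l.2 then 1 else 2
             end
  | inr _ => 3
  end.

Definition lcn_adj n (f : formula n) (col : bool) (u v : lcn_vert f) : bool :=
  match u, v with
  | inl l, inr c => col && (l \in val c)
  | inr c, inl l => col && (l \in val c)
  | inl l1, inl l2 => ~~ col && (l1.1 == l2.1) && (l1.2 != l2.2)
  | inr _, inr _ => false
  end.

Definition LCN n (f : formula n) (s : passign n) : lgraph :=
  @LGraph (lcn_vert f) (@lcn_lab n f s) (@lcn_adj n f).

(* Round t+1 colour = (round t colour, for each edge colour c the multiset of
   round-t colours of c-neighbours); multisets agree iff for every colour class
   (represented by any vertex w) the numbers of neighbours in it agree. *)
Fixpoint wl_eq (V : finType) (lab : V -> nat) (adj : bool -> rel V) (t : nat)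
    : rel V :=
  match t with
  | 0 => fun u v => lab u == lab v
  | t'.+1 => fun u v =>
      wl_eq lab adj t' u v &&
      [forall c : bool, forall w : V,
         #|[pred x | adj c u x && wl_eq lab adj t' x w]| ==
         #|[pred x | adj c v x && wl_eq lab adj t' x w]|]
  end.

Definition du_V (G1 G2 : lgraph) : finType := (lg_V G1 + lg_V G2)%type.
Definition du_lab (G1 G2 : lgraph) (v : du_V G1 G2) : nat :=
  match v with inl x => lg_lab x | inr y => lg_lab y end.
Definition du_adj (G1 G2 : lgraph) (c : bool) (u v : du_V G1 G2) : bool :=
  match u, v with
  | inl x, inl y => lg_adj c x y
  | inr x, inr y => lg_adj c x y
  | _, _ => false
  end.

Definition in_left (G1 G2 : lgraph) (v : du_V G1 G2) : bool :=
  if v is inl _ then true else false.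

(* WL-indistinguishable: in the refinement of the disjoint union, every colour
   occurs equally often in both graphs (at every round, equivalently at the
   stable round). *)
Definition wl_indist (G1 G2 : lgraph) : Prop :=
  forall (t : nat) (w : du_V G1 G2),
    #|[pred x | in_left x && wl_eq (@du_lab G1 G2) (@du_adj G1 G2) t x w]| =
    #|[pred x | ~~ in_left x && wl_eq (@du_lab G1 G2) (@du_adj G1 G2) t x w]|.

From mathcomp Require Import all_boot zify.
Set Implicit Arguments. Unset Strict Implicit. Unset Printing Implicit Defensive.

(* A map [phi] from the vertices of a graph onto a finite set is equitable when
   labels and, for each edge colour, the number of neighbours in each fibre only
   depend on the fibre. Colour refinement never separates two vertices of the
   same fibre, so two graphs with equitable maps onto the same quotient and with
   fibres of equal sizes are WL-indistinguishable. Such maps come from coverings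
   of formulas: if every clause of [h] through the image of a literal [l] lifts to
   exactly one clause of [f] through [l], then LCN(f) projects equitably onto
   LCN(h), and the fibres over a clause of [h] can be counted by double counting.

   The formulas have N blocks of four variables x0, x1, y0, y1; each block is a
   double cover of the unsatisfiable formula (x | y) (x | ~y) (~x | y) (~x | ~y):
   its clauses are {x_i^p, y_j^q} with j = i, except that j = 1 - i when p <> q
   in a twisted block. A twisted block is satisfiable, an untwisted one is two
   disjoint copies of the unsatisfiable formula. The satisfiable [f] twists all
   blocks, the unsatisfiable [g] all but the first one, and identifying x0 with
   x1 and y0 with y1 in the first block turns both into coverings of the same
   formula. An assignment of fewer than N variables leaves a block free; moving
   it to the front by an automorphism of [f] yields an assignment compatible with
   this covering. *)

Lemma card_pred_sum (X : finType) (P : pred X) : #|[pred x | P x]| = \sum_x P x.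
Proof.
by rewrite -sum1_card big_mkcond /=; apply: eq_bigr => x _; rewrite inE; case: (P x).
Qed.

Lemma card_pred_sumType (A B : finType) (P : pred (A + B)) :
  #|[pred x | P x]| = #|[pred a | P (inl a)]| + #|[pred b | P (inr b)]|.
Proof. by rewrite !card_pred_sum big_sumType. Qed.

Lemma card_sig_pred (T : finType) (A : {pred T}) (Q : pred T) :
  #|[pred x : {x | x \in A} | Q (val x)]| = #|[pred x | (x \in A) && Q x]|.
Proof.
rewrite !card_pred_sum -(big_sub A (fun x => Q x : nat)) big_mkcond.
by apply: eq_bigr => x _; case: (x \in A).
Qed.

Lemma card_pred_inj (X : finType) (T : X -> X) (P : pred X) :
  injective T -> #|[pred x | P (T x)]| = #|[pred x | P x]|.
Proof. by move=> injT; rewrite !card_pred_sum [RHS](reindex_inj injT). Qed.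

Lemma card_pred_uniq (X : finType) (P : pred X) x0 :
  (forall x, P x -> x = x0) -> #|[pred x | P x]| = P x0.
Proof.
move=> P_x0; case Px0: (P x0) => /=.
  by apply: (@eq_card1 _ x0) => x; rewrite !inE; apply/idP/eqP => [/P_x0|->].
by apply: eq_card0 => x; rewrite inE; apply: contraFF Px0 => Px; rewrite -(P_x0 x Px).
Qed.

Lemma card_by_fibres (X K : finType) (phi : X -> K) (A P : pred X) :
  (forall x y, phi x = phi y -> P x = P y) ->
  #|[pred x | A x && P x]| =
  \sum_(k | [exists x, (phi x == k) && P x]) #|[pred x | A x && (phi x == k)]|.
Proof.
move=> P_phi; rewrite -sum1_card.
rewrite (partition_big phi (fun k => [exists x, (phi x == k) && P x])); last first.
  by move=> x; rewrite inE => /andP[_ Px]; apply/existsP; exists x; rewrite eqxx.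
apply: eq_bigr => k /existsP[x0 /andP[/eqP <- Px0]].
rewrite -sum1_card; apply: eq_bigl => x; rewrite !inE.
by case: eqP => [/P_phi ->|]; rewrite ?Px0 ?andbT ?andbF.
Qed.

Lemma inl_eqE (A B : eqType) (x y : A) : (@inl A B x == inl y) = (x == y).
Proof. by apply/eqP/eqP => [[]|->]. Qed.

Lemma inr_eqE (A B : eqType) (x y : B) : (@inr A B x == inr y) = (x == y).
Proof. by apply/eqP/eqP => [[]|->]. Qed.

(** * Equitable maps and colour refinement *)

Definition equitable (V K : finType) (lab : V -> nat) (adj : bool -> rel V)
    (phi : V -> K) (labK : K -> nat) (cnt : bool -> K -> K -> nat) : Prop :=
  (forall x, lab x = labK (phi x)) /\
  (forall c u k, #|[pred x | adj c u x && (phi x == k)]| = cnt c (phi u) k).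

Section Equitable.

Variables (V K : finType) (lab : V -> nat) (adj : bool -> rel V).
Variables (phi : V -> K) (labK : K -> nat) (cnt : bool -> K -> K -> nat).
Hypothesis phi_equitable : equitable lab adj phi labK cnt.

Lemma wl_eq_fibre t u v w : phi u = phi v -> wl_eq lab adj t u w = wl_eq lab adj t v w.
Proof.
have [phi_lab phi_cnt] := phi_equitable.
elim: t u v w => [|t IH] u v w uv /=; first by rewrite !phi_lab uv.
rewrite (IH u v w uv); congr (_ && _); apply: eq_forallb => c; apply: eq_forallb => w'.
have fibre_w' x y : phi x = phi y -> wl_eq lab adj t x w' = wl_eq lab adj t y w'.
  exact: IH.
rewrite (card_by_fibres (adj c u) fibre_w') (card_by_fibres (adj c v) fibre_w').
by congr (_ == _); apply: eq_bigr => k _; rewrite !phi_cnt uv.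
Qed.

Lemma equitable_comp (lab' : V -> nat) (T : V -> V) :
  injective T -> (forall c u x, adj c (T u) (T x) = adj c u x) ->
  (forall x, lab' x = lab (T x)) -> equitable lab' adj (phi \o T) labK cnt.
Proof.
have [phi_lab phi_cnt] := phi_equitable.
move=> injT adjT labT; split=> [x|c u k /=]; first by rewrite labT phi_lab.
rewrite -phi_cnt -(card_pred_inj (fun x => adj c (T u) x && (phi x == k)) injT).
by apply: eq_card => x; rewrite !inE adjT.
Qed.

End Equitable.

Definition du_fun (G1 G2 : lgraph) (K : Type) (phi1 : lg_V G1 -> K)
    (phi2 : lg_V G2 -> K) (x : du_V G1 G2) : K :=
  match x with inl a => phi1 a | inr b => phi2 b end.

Section DisjointUnion.

Variables (G1 G2 : lgraph) (K : finType) (labK : K -> nat) (cnt : bool -> K -> K -> nat).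
Variables (phi1 : lg_V G1 -> K) (phi2 : lg_V G2 -> K).
Hypotheses (phi1_equitable : equitable (@lg_lab G1) (@lg_adj G1) phi1 labK cnt)
           (phi2_equitable : equitable (@lg_lab G2) (@lg_adj G2) phi2 labK cnt).

Lemma equitable_du :
  equitable (@du_lab G1 G2) (@du_adj G1 G2) (du_fun phi1 phi2) labK cnt.
Proof.
have [lab1 cnt1] := phi1_equitable; have [lab2 cnt2] := phi2_equitable.
split=> [[a|b]|c [a|b] k]; [exact: lab1 | exact: lab2 | |]; rewrite card_pred_sumType /=.
  by rewrite -cnt1 [X in _ + X]eq_card0 ?addn0.
by rewrite -cnt2 [X in X + _]eq_card0.
Qed.

Theorem wl_indist_of_equitable :
  (forall k, #|[pred x | phi1 x == k]| = #|[pred x | phi2 x == k]|) -> wl_indist G1 G2.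
Proof.
move=> fibres t w; set phi := du_fun phi1 phi2.
have fibre_w x y : phi x = phi y -> wl_eq (@du_lab G1 G2) (@du_adj G1 G2) t x w =
                                    wl_eq (@du_lab G1 G2) (@du_adj G1 G2) t y w.
  exact: (wl_eq_fibre equitable_du).
rewrite (card_by_fibres (@in_left G1 G2) fibre_w).
rewrite (card_by_fibres (fun x => ~~ @in_left G1 G2 x) fibre_w).
apply: eq_bigr => k _; rewrite !card_pred_sumType /=.
by rewrite [X in _ + X]eq_card0 // [X in _ = X + _]eq_card0 // addn0 fibres.
Qed.

End DisjointUnion.

(** * Coverings of formulas *)

Section Covering.

Variables (n m : nat) (r : 'I_n -> 'I_m).

Definition map_lit (l : lit n) : lit m := (r l.1, l.2).
Definition map_clause (c : clause n) : clause m := [set map_lit l | l in c].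

Lemma map_clause_set2 l1 l2 : map_clause [set l1; l2] = [set map_lit l1; map_lit l2].
Proof. by rewrite /map_clause imsetU !imset_set1. Qed.

Definition covers (f : formula n) (h : formula m) : Prop :=
  (forall c, c \in f -> {in c &, injective map_lit}) /\
  (forall l d, #|[pred c | [&& c \in f, l \in c & map_clause c == d]]| =
               (d \in h) && (map_lit l \in d)).

Lemma covers_intro (f : formula n) (h : formula m) :
  (forall c, c \in f -> {in c &, injective map_lit}) ->
  (forall c, c \in f -> map_clause c \in h) ->
  (forall l c1 c2, c1 \in f -> c2 \in f -> l \in c1 -> l \in c2 ->
     map_clause c1 = map_clause c2 -> c1 = c2) ->
  (forall l d, d \in h -> map_lit l \in d ->
     exists c, [/\ c \in f, l \in c & map_clause c = d]) ->
  covers f h.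
Proof.
move=> inj_c f_h uniq_c lift_c; split=> // l d.
have [/andP[dh ld]|] := boolP ((d \in h) && (map_lit l \in d)).
  have [c0 [c0f lc0 <-]] := lift_c l d dh ld.
  rewrite (@card_pred_uniq _ _ c0) /= ?c0f ?lc0 ?eqxx //.
  by move=> c /and3P[cf lc /eqP]; apply: uniq_c cf c0f lc lc0.
move=> not_dl /=; apply: eq_card0 => c; rewrite inE.
by apply: contraNF not_dl => /and3P[cf lc /eqP <-]; rewrite f_h //= imset_f.
Qed.

Lemma covers_fibre_mul (f : formula n) (h : formula m) d : covers f h ->
  #|[pred c | (c \in f) && (map_clause c == d)]| * #|d| =
  (d \in h) * #|[pred l | map_lit l \in d]|.
Proof.
move=> [inj_c cnt_c]; rewrite -sum_nat_const.
transitivity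
    (\sum_(c in [pred c | (c \in f) && (map_clause c == d)]) \sum_l (l \in c : nat)).
  apply: eq_bigr => c; rewrite inE => /andP[cf /eqP <-].
  by rewrite -card_pred_sum card_in_imset //; apply: inj_c.
rewrite exchange_big card_pred_sum big_distrr /=; apply: eq_bigr => l _.
rewrite mulnb -cnt_c card_pred_sum big_mkcond /=; apply: eq_bigr => c _.
by rewrite inE; case: (c \in f); case: (map_clause c == d); case: (l \in c).
Qed.

Lemma eq_card_covers_fibre (f g : formula n) (h : formula m) d :
  covers f h -> covers g h -> set0 \notin f -> set0 \notin g ->
  #|[pred c | (c \in f) && (map_clause c == d)]| =
  #|[pred c | (c \in g) && (map_clause c == d)]|.
Proof.
move=> fh gh f0 g0; have [->|d0] := eqVneq d set0.
  have fibre0 (F : formula n) : set0 \notin F ->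
      #|[pred c | (c \in F) && (map_clause c == set0)]| = 0.
    move=> F0; apply: eq_card0 => c; rewrite inE imset_eq0.
    by apply: contraNF F0 => /andP[cF /eqP <-].
  by rewrite !fibre0.
have d_gt0 : 0 < #|d| by rewrite card_gt0.
by apply/eqP; rewrite -(eqn_pmul2r d_gt0) (covers_fibre_mul _ fh) (covers_fibre_mul _ gh).
Qed.

End Covering.

(** * Projections of literal-clause graphs *)

Definition lit_lab n (s : passign n) (l : lit n) : nat :=
  match s l.1 with None => 0 | Some b => if b == l.2 then 1 else 2 end.

Definition quot_lab m (s : passign m) (k : lit m + clause m) : nat :=
  if k is inl l then lit_lab s l else 3.

Definition quot_cnt m (h : formula m) (col : bool) (k k' : lit m + clause m) : nat :=
  match col, k, k' with
  | true, inl l, inr d => (d \in h) && (l \in d)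
  | true, inr d, inl l => l \in d
  | false, inl l, inl l' => (l'.1 == l.1) && (l'.2 != l.2)
  | _, _, _ => 0
  end.

Section Projection.

Variables (n m : nat) (r : 'I_n -> 'I_m).

Definition lcn_proj (f : formula n) (x : lcn_vert f) : lit m + clause m :=
  match x with inl l => inl (map_lit r l) | inr c => inr (map_clause r (val c)) end.

Lemma lcn_proj_equitable (f : formula n) (h : formula m) (s : passign n) (s' : passign m) :
  covers r f h -> (forall v, s v = s' (r v)) ->
  equitable (@lcn_lab n f s) (@lcn_adj n f) (@lcn_proj f) (quot_lab s') (quot_cnt h).
Proof.
move=> [inj_c cnt_c] ss'; split=> [[l|c] //|col [l|c0] k]; first by rewrite /= /lit_lab ss'.
  rewrite card_pred_sumType /=; case: col => /=.
    rewrite [X in X + _]eq_card0 // add0n.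
    case: k => [k|d] /=; first by rewrite eq_card0 // => c; rewrite !inE /= andbF.
    by rewrite -cnt_c -card_sig_pred; apply: eq_card => c; rewrite !inE inr_eqE.
  rewrite [X in _ + X]eq_card0 ?addn0 //.
  case: k => [k|d] /=; last by rewrite eq_card0 // => l'; rewrite inE andbF.
  rewrite (@card_pred_uniq _ _ (l.1, ~~ l.2)); last first.
    by case=> v b /= /andP[/andP[/eqP -> +] _]; case: l.2; case: b.
  case: k l => [v' b'] [v b] /=; rewrite eqxx inl_eqE /map_lit xpair_eqE /=.
  by case: b; case: b'; rewrite ?andbT ?andbF //= eq_sym.
rewrite card_pred_sumType [X in _ + X]eq_card0 ?addn0 //.
case: col => /=; last by rewrite eq_card0.
case: k => [k|d] /=; last by rewrite eq_card0 // => l; rewrite inE andbF.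
have [/imsetP[l0 l0c0 ->]|k_c0] := boolP (k \in map_clause r (val c0)).
  rewrite (@card_pred_uniq _ _ l0) /= ?l0c0 ?eqxx // => l /andP[lc0].
  by rewrite inl_eqE => /eqP; apply: (inj_c _ (valP c0)).
apply: eq_card0 => l; rewrite inE; apply: contraNF k_c0 => /andP[lc0].
by rewrite inl_eqE => /eqP <-; apply: imset_f.
Qed.

Lemma eq_card_lcn_proj_fibre (f g : formula n) (h : formula m) k :
  covers r f h -> covers r g h -> set0 \notin f -> set0 \notin g ->
  #|[pred x : lcn_vert f | lcn_proj x == k]| = #|[pred x : lcn_vert g | lcn_proj x == k]|.
Proof.
move=> fh gh f0 g0; rewrite !card_pred_sumType /=.
case: k => [l|d].
  by rewrite [X in _ + X]eq_card0 // [X in _ = _ + X]eq_card0.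
rewrite [X in X + _]eq_card0 // [X in _ = X + _]eq_card0 // !add0n.
have clause_fibre (F : formula n) :
    #|[pred c : {c | c \in F} | inr (map_clause r (val c)) == inr d :> lit m + clause m]| =
    #|[pred c | (c \in F) && (map_clause r c == d)]|.
  by rewrite -card_sig_pred; apply: eq_card => c; rewrite !inE inr_eqE.
by rewrite !clause_fibre (eq_card_covers_fibre _ fh gh).
Qed.

End Projection.

Section Relabel.

Variables (n : nat) (f : formula n) (sigma : 'I_n -> 'I_n).
Hypotheses (sigma_inj : injective sigma)
           (f_sigma : forall c, c \in f -> map_clause sigma c \in f).

Definition lcn_relabel (x : lcn_vert f) : lcn_vert f :=
  match x with
  | inl l => inl (map_lit sigma l)
  | inr c => inr (exist _ (map_clause sigma (val c)) (f_sigma (valP c)))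
  end.

Lemma map_lit_inj : injective (map_lit sigma).
Proof. by move=> [v b] [v' b'] [/sigma_inj -> ->]. Qed.

Lemma lcn_relabel_inj : injective lcn_relabel.
Proof.
case=> [l|c] [l'|c'] //= /eqP; rewrite ?inl_eqE ?inr_eqE => /eqP.
  by move/map_lit_inj ->.
by move/(congr1 val)/(imset_inj map_lit_inj) => cc'; congr inr; apply: val_inj.
Qed.

Lemma lcn_relabel_adj col x y :
  lcn_adj col (lcn_relabel x) (lcn_relabel y) = lcn_adj col x y.
Proof.
case: x y => [l|c] [l'|c'] //=; rewrite ?(mem_imset _ _ map_lit_inj) //.
by rewrite (inj_eq sigma_inj).
Qed.

Lemma lcn_relabel_equitable (K : finType) (s s' : passign n) (phi : lcn_vert f -> K)
    (labK : K -> nat) (cnt : bool -> K -> K -> nat) :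
  (forall v, s v = s' (sigma v)) ->
  equitable (@lcn_lab n f s') (@lcn_adj n f) phi labK cnt ->
  equitable (@lcn_lab n f s) (@lcn_adj n f) (phi \o lcn_relabel) labK cnt.
Proof.
move=> ss' phi_eq; apply: (equitable_comp phi_eq lcn_relabel_inj lcn_relabel_adj).
by case=> [l|c] //=; rewrite /lit_lab ss'.
Qed.

End Relabel.

(* Variable [v] is copy [odd v] of the x-variable ([~~ side v]) or the
   y-variable ([side v]) of block [v %/ 4]. The clause through literal [(v, p)]
   whose other literal has sign [q] uses variable [partner_var t v p q]; block 0
   is twisted iff [t], the other blocks always are. *)
Definition side (v : nat) : bool := 2 <= v %% 4.

Definition partner_var (t : bool) (v : nat) (p q : bool) : nat :=
  4 * (v %/ 4) + 2 * ~~ side v + (odd v (+) ((4 <= v) || t) && (p != q)).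

Definition rho_var (v : nat) : nat := if v < 4 then 2 * side v else v.

Definition swap_block (j b : nat) : nat := if b == 0 then j else if b == j then 0 else b.

Definition swap_var (j v : nat) : nat := 4 * swap_block j (v %/ 4) + v %% 4.

Lemma var_eq u v : u %/ 4 = v %/ 4 -> side u = side v -> odd u = odd v -> u = v.
Proof. rewrite /side; lia. Qed.

Lemma partner_block t v p q : partner_var t v p q %/ 4 = v %/ 4.
Proof. rewrite /partner_var /side; lia. Qed.

Lemma side_partner t v p q : side (partner_var t v p q) = ~~ side v.
Proof. rewrite /partner_var /side; lia. Qed.

Lemma odd_partner t v p q :
  odd (partner_var t v p q) = odd v (+) ((4 <= v) || t) && (p != q).
Proof. rewrite /partner_var /side; lia. Qed.

Lemma partner_var_lt n t v p q : v < 4 * n -> partner_var t v p q < 4 * n.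
Proof. rewrite /partner_var /side; lia. Qed.

Lemma partner_var_small t v p q : (partner_var t v p q < 4) = (v < 4).
Proof.
have := partner_block t v p q; move: (partner_var t v p q) => w wv.
by apply/idP/idP; lia.
Qed.

Lemma partner_var_large t v p q : (4 <= partner_var t v p q) = (4 <= v).
Proof. by rewrite leqNgt partner_var_small -leqNgt. Qed.

Lemma partner_varK t v p q : partner_var t (partner_var t v p q) q p = v.
Proof.
apply: var_eq; rewrite ?partner_block ?side_partner ?negbK //.
by rewrite !odd_partner partner_var_large [q == p]eq_sym -addbA addbb addbF.
Qed.

Lemma rho_var_lt n v : v < n -> rho_var v < n.
Proof. rewrite /rho_var /side; case: ifP => //; lia. Qed.

Lemma rho_var_small v : v < 4 -> rho_var v = 2 * side v.
Proof. by rewrite /rho_var => ->. Qed.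

Lemma rho_var_large v : 4 <= v -> rho_var v = v.
Proof. by move=> v4; rewrite /rho_var ltnNge v4. Qed.

Lemma side_rho v : side (rho_var v) = side v.
Proof. by rewrite /rho_var; case: ifP => // v4; rewrite /side; case: (2 <= v %% 4). Qed.

Lemma rho_partner t t' u v p q : rho_var u = rho_var v ->
  rho_var (partner_var t u p q) = rho_var (partner_var t' v p q).
Proof.
case: (ltnP u 4) => u4 ruv.
  have v4 : v < 4.
    by move: ruv; rewrite (rho_var_small u4) /rho_var /side; case: (ltnP v 4) => // v4; lia.
  rewrite !rho_var_small ?partner_var_small // !side_partner.
  by move: ruv; rewrite !rho_var_small //; case: (side u); case: (side v).
have v4 : 4 <= v.
  by move: ruv; rewrite (rho_var_large u4) /rho_var /side; case: (ltnP v 4) => // v4; lia.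
move: ruv; rewrite !rho_var_large ?partner_var_large // => <-.
by rewrite /partner_var u4.
Qed.

Lemma swap_var_lt n j v : j < n -> v < 4 * n -> swap_var j v < 4 * n.
Proof. rewrite /swap_var /swap_block; case: eqP => _; [|case: eqP => _]; lia. Qed.

Lemma swap_var_block j v : swap_var j v %/ 4 = swap_block j (v %/ 4).
Proof. rewrite /swap_var; lia. Qed.

Lemma swap_var_mod j v : swap_var j v %% 4 = v %% 4.
Proof. rewrite /swap_var; lia. Qed.

Lemma side_swap_var j v : side (swap_var j v) = side v.
Proof. by rewrite /side swap_var_mod. Qed.

Lemma odd_swap_var j v : odd (swap_var j v) = odd v.
Proof. rewrite /swap_var; lia. Qed.

Lemma swap_blockK j : involutive (swap_block j).
Proof. by move=> b; rewrite /swap_block; repeat case: eqP => //=; lia. Qed.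

Lemma swap_varK j : involutive (swap_var j).
Proof. by move=> v; rewrite {1}/swap_var swap_var_block swap_var_mod swap_blockK; lia. Qed.

Lemma swap_partner j v p q :
  swap_var j (partner_var true v p q) = partner_var true (swap_var j v) p q.
Proof.
apply: var_eq; rewrite ?swap_var_block ?partner_block ?swap_var_block //.
  by rewrite side_swap_var !side_partner side_swap_var.
by rewrite odd_swap_var !odd_partner odd_swap_var !orbT.
Qed.

Section Construction.

Variable K : nat.
Local Notation n := (4 * K).

Definition partner (t : bool) (l : lit n) (q : bool) : lit n :=
  (Ordinal (partner_var_lt t l.2 q (ltn_ord l.1)), q).

Definition rho (v : 'I_n) : 'I_n := Ordinal (rho_var_lt (ltn_ord v)).

Definition swap (j : 'I_K) (v : 'I_n) : 'I_n :=
  Ordinal (swap_var_lt (ltn_ord j) (ltn_ord v)).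

Definition cover_formula (t : bool) : formula n :=
  [set [set l; partner t l q] | l : lit n, q : bool].

Definition quot_formula : formula n := map_clause rho @: cover_formula true.

Lemma partnerK t q (l : lit n) : partner t (partner t l q) l.2 = l.
Proof. by case: l => v p; congr pair; apply: val_inj; apply: partner_varK. Qed.

Lemma cover_formulaP t c :
  reflect (exists l q, c = [set l; partner t l q]) (c \in cover_formula t).
Proof.
apply: (iffP imset2P) => [[l q _ _ ->]|[l [q ->]]]; first by exists l, q.
by exists l q.
Qed.

Lemma cover_formula_clause t c l :
  c \in cover_formula t -> l \in c -> exists q, c = [set l; partner t l q].
Proof.
case/cover_formulaP=> l1 [q ->]; rewrite !inE => /orP[]/eqP->; first by exists q.
by exists l1.2; rewrite setUC partnerK.
Qed.

Lemma set0_notin_cover_formula t : set0 \notin cover_formula t.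
Proof. by apply/negP => /cover_formulaP[l [q /setP/(_ l)]]; rewrite !inE eqxx. Qed.

Lemma cover_formula_3SAT t : is3SAT (cover_formula t).
Proof. by move=> c /cover_formulaP[l [q ->]]; rewrite cards2; case: (_ != _). Qed.

Lemma cover_formula_sat : satisfiable (cover_formula true).
Proof.
pose a (v : 'I_n) := odd v == side v.
exists a => c /cover_formulaP[[v p] [q ->]].
have [al|nal] := boolP (lit_val a (v, p)); first by exists (v, p); rewrite ?set21.
exists (partner true (v, p) q); rewrite ?set22 //.
move: nal; rewrite /lit_val /a /= side_partner odd_partner orbT.
by case: (odd v); case: (side v); case: p; case: q.
Qed.

Lemma cover_formula_unsat : 0 < K -> ~ satisfiable (cover_formula false).
Proof.
move=> K_gt0 [a sat_a].
have n_gt0 : 0 < n by rewrite muln_gt0.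
have n_gt2 : 2 < n by lia.
pose x0 : 'I_n := Ordinal n_gt0; pose x2 : 'I_n := Ordinal n_gt2.
have partner_x0 : partner false (x0, ~~ a x0) (~~ a x2) = (x2, ~~ a x2).
  by congr pair; apply: val_inj.
have clause0 : [set (x0, ~~ a x0); (x2, ~~ a x2)] \in cover_formula false.
  by apply/cover_formulaP; exists (x0, ~~ a x0), (~~ a x2); rewrite partner_x0.
have [l] := sat_a _ clause0.
by rewrite !inE => /orP[]/eqP->; rewrite /lit_val /=; case: (a _).
Qed.

Lemma rho_partner_lit t t' (l l' : lit n) q : map_lit rho l = map_lit rho l' ->
  map_lit rho (partner t l q) = map_lit rho (partner t' l' q).
Proof.
case: l l' => [v p] [v' p'] [rvv' <-].
by congr pair; apply: val_inj; apply: rho_partner.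
Qed.

Lemma rho_partner_neq t (l : lit n) q : map_lit rho (partner t l q) != map_lit rho l.
Proof.
apply/eqP => /(congr1 (fun l : lit n => side l.1)) /=.
by rewrite !side_rho side_partner; case: side.
Qed.

Lemma covers_cover_formula t : covers rho (cover_formula t) quot_formula.
Proof.
apply: covers_intro.
- move=> c /cover_formulaP[l [q ->]] x y; have := rho_partner_neq t l q.
  by rewrite !inE => neq /orP[]/eqP-> /orP[]/eqP-> // E; rewrite E eqxx in neq.
- move=> c /cover_formulaP[l [q ->]].
  rewrite map_clause_set2 (@rho_partner_lit t true l l q erefl) -map_clause_set2.
  by apply: imset_f; apply/cover_formulaP; exists l, q.
- move=> l c1 c2 c1f c2f /(cover_formula_clause c1f)[q1 ->].
  move=> /(cover_formula_clause c2f)[q2 ->]; rewrite !map_clause_set2 => E.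
  have : map_lit rho (partner t l q1) \in [set map_lit rho l; map_lit rho (partner t l q2)].
    by rewrite -E !inE eqxx orbT.
  by rewrite !inE (negbTE (rho_partner_neq t l q1)) /= => /eqP/(congr1 snd) /= ->.
- move=> l d /imsetP[c' c'f ->] /imsetP[l' l'c' E].
  have [q ->] := cover_formula_clause c'f l'c'.
  exists [set l; partner t l q]; split; [exact: imset2_f | exact: set21 |].
  by rewrite !map_clause_set2 (rho_partner_lit t true q E) E.
Qed.

Lemma swapK j : involutive (swap j).
Proof. by move=> v; apply: val_inj; apply: swap_varK. Qed.

Lemma swap_inj j : injective (swap j).
Proof. exact: inv_inj (swapK j). Qed.

Lemma cover_formula_swap j c :
  c \in cover_formula true -> map_clause (swap j) c \in cover_formula true.
Proof.
case/cover_formulaP=> l [q ->]; rewrite map_clause_set2; apply/cover_formulaP.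
exists (map_lit (swap j) l), q; congr [set _; _].
by congr pair; apply: val_inj; apply: swap_partner.
Qed.

Lemma free_block (s : passign n) : #|assigned s| < K ->
  exists j : 'I_K, forall v : 'I_n, v %/ 4 = j -> s v = None.
Proof.
move=> small_s.
have blk_lt (v : 'I_n) : v %/ 4 < K by have := ltn_ord v; lia.
pose blk (v : 'I_n) : 'I_K := Ordinal (blk_lt v).
have : ~~ ([set: 'I_K] \subset blk @: assigned s).
  apply: contraTN small_s => /subset_leq_card; rewrite cardsT card_ord -leqNgt.
  by move/leq_trans; apply; apply: leq_imset_card.
case/subsetPn => j _ j_free; exists j => v vj; apply/eqP; apply: contraNT j_free => sv.
by apply/imsetP; exists v; [rewrite inE | apply: val_inj].
Qed.

Lemma cover_formulas_wl_indist (s : passign n) : #|assigned s| < K ->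
  exists s' : passign n,
    wl_indist (LCN (cover_formula true) s) (LCN (cover_formula false) s').
Proof.
move=> /free_block[j j_free].
pose s' : passign n := [ffun v => s (swap j v)]; exists s'.
have s'_rho v : s' v = s' (rho v).
  have [v4|v4] := ltnP v 4; last by congr (s' _); apply: val_inj; rewrite /= rho_var_large.
  have swap_small (w : 'I_n) : w < 4 -> swap j w %/ 4 = j.
    by move=> w4; rewrite /= swap_var_block divn_small.
  by rewrite !ffunE !j_free ?swap_small //= rho_var_small //; case: side.
have s_swap v : s v = s' (swap j v) by rewrite ffunE swapK.
have swap_f := @cover_formula_swap j.
have eq_true := lcn_proj_equitable (covers_cover_formula true) s'_rho.
have eq_false := lcn_proj_equitable (covers_cover_formula false) s'_rho.
have eq_true_s := lcn_relabel_equitable (swap_inj (j := j)) swap_f s_swap eq_true.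
apply: (wl_indist_of_equitable (G1 := LCN _ s) (G2 := LCN _ s') eq_true_s eq_false).
move=> k /=; rewrite (card_pred_inj (fun x => lcn_proj rho x == k)
                        (lcn_relabel_inj (swap_inj (j := j)) (f_sigma := swap_f))).
exact: eq_card_lcn_proj_fibre (covers_cover_formula true) (covers_cover_formula false)
  (set0_notin_cover_formula true) (set0_notin_cover_formula false).
Qed.

End Construction.

Theorem corollary1 :
  exists C : nat, 0 < C /\
  forall N : nat, 4 <= N ->
  exists (n1 n2 : nat) (f : formula n1) (g : formula n2),
    is3SAT f /\ is3SAT g /\ n1 <= C * N /\ n2 <= C * N /\
    satisfiable f /\ ~ satisfiable g /\
        (forall s : passign n1, #|assigned s| <= N./2 - 1 ->
          exists s' : passign n2, wl_indist (LCN f s) (LCN g s')).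
Proof.
exists 4; split=> // N N4.
exists (4 * N), (4 * N), (cover_formula N true), (cover_formula N false).
do !split=> //; [exact: cover_formula_3SAT | exact: cover_formula_3SAT |
                 exact: cover_formula_sat | apply: cover_formula_unsat; lia |].
by move=> s small_s; apply: cover_formulas_wl_indist; lia.
Qed.
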